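(* Let $(f^*,g^* )$ be a stationary $\hat\alpha$-discounted Nash equilibrium of a two-player continuous time stochastic game for some $\hat\alpha>0$, with $\|\mu\|>0$, and suppose: (M1) $(f^*,g^* )$ is pure, i.e. for each $s\in S$ there are $a^1_s\in A^1(s)$, $a^2_s\in A^2(s)$ with $f^*(s,a^1_s)=1$, $g^*(s,a^2_s)=1$; (M2) there exist $p_s\ge0$ with $\sum_{s\in S}p_s=1$ such that $Q(f^*,g^* )_{ss'}=\|\mu\|\,(p_{s'}-\delta(s,s'))$ for all $s,s'\in S$; (M3) for all $s\in S$, $a^1\in A^1(s)$: $\sum_{s'}p_{s'}r^1(s',a^1_{s'},a^2_{s'})\ge\sum_{s'}\left(\frac{\mu(s',s,a^1,a^2_s)}{\|\mu\|}+\delta(s,s')\right)r^1(s',a^1_{s'},a^2_{s'})$, and for all $s\in S$, $a^2\in A^2(s)$: $\sum_{s'}p_{s'}r^2(s',a^1_{s'},a^2_{s'})\ge\sum_{s'}\left(\frac{\mu(s',s,a^1_s,a^2)}{\|\mu\|}+\delta(s,s')\right)r^2(s',a^1_{s'},a^2_{s'})$. Then $(f^*,g^* )$ is a Blackwell-Nash equilibrium.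
   Context: A two-player continuous time stochastic game consists of a finite state set $S$, finite nonempty action sets $A^1(s),A^2(s)$, reward rates $r^i(s,a^1,a^2)$ ($i=1,2$), and transition rates $\mu(s',s,a^1,a^2)\ge0$ from $s$ to $s'\ne s$, with $\mu(s,s,a^1,a^2)=-\sum_{s'\ne s}\mu(s',s,a^1,a^2)$. Let $\|\mu\|=\max_{s,a^1,a^2}\sum_{s'\ne s}\mu(s',s,a^1,a^2)$ and let $\delta(s,s')$ be the Kronecker delta. Stationary strategies $f,g$ assign to each state a probability distribution on $A^1(s)$, resp. $A^2(s)$. For a stationary pair, $r^i(s,f,g)=\sum_{a^1,a^2}f(s,a^1)g(s,a^2)r^i(s,a^1,a^2)$ and $Q(f,g)$ is the generator matrix with $Q(f,g)_{ss'}=\sum_{a^1,a^2}f(s,a^1)g(s,a^2)\mu(s',s,a^1,a^2)$. For $\alpha>0$ the $\alpha$-discounted payoff is $v^i_\alpha(f,g)=(\alpha I-Q(f,g))^{-1}r^i(f,g)$ (equivalently $E^s_{f,g}\int_0^\infty e^{-\alpha t}r^i(s_t,f,g)dt$). A stationary pair $(f^*,g^* )$ is an $\alpha$-discounted Nash equilibrium if for all $s$, $v^1_\alpha(s,f^*,g^* )\ge v^1_\alpha(s,f,g^* )$ for all stationary $f$ and $v^2_\alpha(s,f^*,g^* )\ge v^2_\alpha(s,f^*,g)$ for all stationary $g$. It is a Blackwell-Nash equilibrium (BNE) if there is $\alpha_0>0$ such that it is an $\alpha$-discounted Nash equilibrium for all $\alpha\in(0,\alpha_0]$. *)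

From HB Require Import structures.
From mathcomp Require Import all_boot all_order all_algebra.
Set Implicit Arguments. Unset Strict Implicit. Unset Printing Implicit Defensive.
Import Order.TTheory GRing.Theory Num.Theory.
Local Open Scope ring_scope.

Section Game.
Variables (R : realFieldType) (n : nat) (A1 A2 : finType).
Variables (As1 : 'I_n -> {set A1}) (As2 : 'I_n -> {set A2}).
(* off-diagonal transition rates: mu s' s a1 a2 = rate from s to s' (s' <> s);
   the value for s' = s is ignored and replaced as in the paper *)
Variable mu : 'I_n -> 'I_n -> A1 -> A2 -> R.

Definition delta (s s' : 'I_n) : R := if s == s' then 1 else 0.

Definition muf (s' s : 'I_n) (a1 : A1) (a2 : A2) : R :=
  if s' == s then - \sum_(t < n | t != s) mu t s a1 a2 else mu s' s a1 a2.

Definition normmu : R :=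
  \big[Num.max/0]_(s < n) \big[Num.max/0]_(a1 in As1 s)
     \big[Num.max/0]_(a2 in As2 s) \sum_(t < n | t != s) mu t s a1 a2.

Definition is_strat1 (f : 'I_n -> A1 -> R) : Prop :=
  forall s, (forall a, 0 <= f s a) /\ (forall a, a \notin As1 s -> f s a = 0)
            /\ \sum_(a in As1 s) f s a = 1.
Definition is_strat2 (g : 'I_n -> A2 -> R) : Prop :=
  forall s, (forall a, 0 <= g s a) /\ (forall a, a \notin As2 s -> g s a = 0)
            /\ \sum_(a in As2 s) g s a = 1.

Definition rew (r : 'I_n -> A1 -> A2 -> R) (f : 'I_n -> A1 -> R)
  (g : 'I_n -> A2 -> R) (s : 'I_n) : R :=
  \sum_(a1 in As1 s) \sum_(a2 in As2 s) f s a1 * g s a2 * r s a1 a2.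

Definition Qgen (f : 'I_n -> A1 -> R) (g : 'I_n -> A2 -> R) : 'M[R]_n :=
  \matrix_(s, s') \sum_(a1 in As1 s) \sum_(a2 in As2 s)
      f s a1 * g s a2 * muf s' s a1 a2.

Definition vdisc (r : 'I_n -> A1 -> A2 -> R) (alpha : R)
  (f : 'I_n -> A1 -> R) (g : 'I_n -> A2 -> R) (s : 'I_n) : R :=
  (invmx (alpha%:M - Qgen f g) *m (\col_(t < n) rew r f g t)) s 0.

Definition disc_nash (r1 r2 : 'I_n -> A1 -> A2 -> R) (alpha : R)
  (f : 'I_n -> A1 -> R) (g : 'I_n -> A2 -> R) : Prop :=
  forall s,
    (forall f', is_strat1 f' -> vdisc r1 alpha f' g s <= vdisc r1 alpha f g s) /\
    (forall g', is_strat2 g' -> vdisc r2 alpha f g' s <= vdisc r2 alpha f g s).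

Definition blackwell_nash (r1 r2 : 'I_n -> A1 -> A2 -> R)
  (f : 'I_n -> A1 -> R) (g : 'I_n -> A2 -> R) : Prop :=
  exists2 alpha0 : R, 0 < alpha0 &
    forall alpha : R, 0 < alpha -> alpha <= alpha0 -> disc_nash r1 r2 alpha f g.

End Game.

(* Under (M2) the equilibrium chain jumps at rate m = ||mu|| to the fixed
   distribution p, so its alpha-discounted value is explicit:
   v_alpha = (r* + (m / alpha) <p, r*>) / (alpha + m).  Since alpha I - Q is an
   M-matrix (minimum principle), a stationary strategy of player 1 cannot beat
   v_alpha iff for every state s and action a the gap
   alpha v_alpha(s) - sum_t mu(t,s,a,a2_s) v_alpha(t) - r1(s,a,a2_s) is
   nonnegative; and the gap is nonnegative at alpha-hat because f*, g* form an
   alpha-hat equilibrium (deviate in s only).  Up to the factor 1/(alpha + m)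
   the gap is affine in alpha, and (M3) bounds its value at alpha = 0 below by
   m (r*(s) - r1(s,a,a2_s)); so it stays nonnegative on the whole of
   (0, alpha-hat].  Player 2 is handled by exchanging the roles of the
   players. *)
From mathcomp Require Import all_boot all_order all_algebra.
From mathcomp Require Import ring lra.
Import Order.TTheory GRing.Theory Num.Theory.
Local Open Scope ring_scope.
Set Implicit Arguments. Unset Strict Implicit.

Section Generator.
Variables (R : realFieldType) (n : nat).

Definition generator (Q : 'M[R]_n) :=
  (forall s s', s != s' -> 0 <= Q s s') /\ (forall s, \sum_t Q s t = 0).

Lemma scalar_subMmxE (a : R) (Q : 'M[R]_n) (x : 'cV[R]_n) s :
  ((a%:M - Q) *m x) s 0 = a * x s 0 - \sum_t Q s t * x t 0.
Proof. by rewrite mulmxBl mul_scalar_mx !mxE. Qed.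

Variables (Q : 'M[R]_n) (a : R).
Hypotheses (genQ : generator Q) (a_gt0 : 0 < a).

(* At a minimal entry x i, sum_t Q i t x t >= (sum_t Q i t) x i = 0. *)
Lemma generator_minimum_principle (x : 'cV[R]_n) :
  (forall s, 0 <= ((a%:M - Q) *m x) s 0) -> forall s, 0 <= x s 0.
Proof.
have [Qoff Qrow] := genQ; move=> Hx s.
have [i _ i_min] := @arg_minP _ _ _ s predT (fun i => x i 0) isT.
apply: le_trans (i_min s isT); have := Hx i; rewrite scalar_subMmxE.
have -> : \sum_t Q i t * x t 0 =
          \sum_t Q i t * (x t 0 - x i 0) + (\sum_t Q i t) * x i 0.
  by rewrite big_distrl -big_split /=; apply: eq_bigr => t _; ring.
have sum_ge0 : 0 <= \sum_t Q i t * (x t 0 - x i 0).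
  apply: sumr_ge0 => t _; have [<-|ne] := eqVneq i t; first by rewrite subrr mulr0.
  by rewrite mulr_ge0 ?Qoff // subr_ge0 i_min.
rewrite Qrow mul0r addr0 => ax_ge; rewrite -(pmulr_rge0 _ a_gt0); lra.
Qed.

Lemma generator_resolvent_unit : (a%:M - Q) \in unitmx.
Proof.
rewrite -unitmx_tr -row_free_unit -kermx_eq0; apply/eqP/matrixP => i j.
have kerM := mulmx_ker (a%:M - Q)^T.
set K := kermx _ in kerM *; set u := (row i K)^T.
have Mu0 : (a%:M - Q) *m u = 0.
  by rewrite /u -[a%:M - Q]trmxK -trmx_mul -row_mul kerM row0 trmx0.
have u_ge0 := generator_minimum_principle (x := u).
have Nu_ge0 := generator_minimum_principle (x := - u).
rewrite Mu0 in u_ge0; rewrite mulmxN Mu0 oppr0 in Nu_ge0.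
have zero_ge0 (t : 'I_n) : 0 <= (0 : 'cV[R]_n) t 0 by rewrite mxE.
have := u_ge0 zero_ge0 j; have := Nu_ge0 zero_ge0 j.
by rewrite /u !mxE; lra.
Qed.

Lemma resolvent_le (r u : 'cV[R]_n) :
  (forall t, r t 0 <= a * u t 0 - \sum_t' Q t t' * u t' 0) ->
  forall t, (invmx (a%:M - Q) *m r) t 0 <= u t 0.
Proof.
move=> Hr t; set v := invmx _ *m r.
have Mv : (a%:M - Q) *m v = r by rewrite /v mulKVmx ?generator_resolvent_unit.
suff : 0 <= (u - v) t 0 by rewrite !mxE subr_ge0.
apply: generator_minimum_principle => s;
rewrite mulmxBr Mv mxE [X in _ + X]mxE scalar_subMmxE; have := Hr s; lra.
Qed.

(* Otherwise (a I - Q) (v - u) >= 0 for the resolvent v, so v >= u by the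
   minimum principle; hence v = u, contradicting the strict inequality at s. *)
Lemma resolvent_le_at (r u : 'cV[R]_n) s :
  (forall t, t != s -> r t 0 = a * u t 0 - \sum_t' Q t t' * u t' 0) ->
  (forall t, (invmx (a%:M - Q) *m r) t 0 <= u t 0) ->
  r s 0 <= a * u s 0 - \sum_t' Q s t' * u t' 0.
Proof.
move=> Hr Hle; rewrite leNgt; apply/negP => gt_s.
pose v := invmx (a%:M - Q) *m r.
have Mv : (a%:M - Q) *m v = r by rewrite /v mulKVmx ?generator_resolvent_unit.
have Mvu t : ((a%:M - Q) *m (v - u)) t 0 =
             r t 0 - (a * u t 0 - \sum_t' Q t t' * u t' 0).
  by rewrite mulmxBr Mv mxE [X in _ + X]mxE scalar_subMmxE.
have vu0 : v - u = 0.
  apply/matrixP => i j; rewrite (ord1 j) [RHS]mxE; apply/eqP; rewrite eq_le.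
  apply/andP; split; first by rewrite mxE [X in _ + X]mxE subr_le0 Hle.
  apply: generator_minimum_principle => t; rewrite Mvu.
  by have [->|ne] := eqVneq t s; [lra | rewrite Hr // subrr].
by have := Mvu s; rewrite vu0 mulmx0 mxE; lra.
Qed.

End Generator.

Section Game.
Variables (R : realFieldType) (n : nat) (A1 A2 : finType).
Variables (As1 : 'I_n -> {set A1}) (As2 : 'I_n -> {set A2}).
Variable mu : 'I_n -> 'I_n -> A1 -> A2 -> R.

Lemma muf_row_sum0 s a1 a2 : \sum_s' muf mu s' s a1 a2 = 0.
Proof.
rewrite (bigD1 s) //= {1}/muf eqxx (eq_bigr (fun t => mu t s a1 a2)) ?addNr //.
by move=> t /negbTE; rewrite /muf => ->.
Qed.

Lemma sum_deltaE (F : 'I_n -> R) t : \sum_t' @delta R n t t' * F t' = F t.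
Proof.
rewrite (bigD1 t) //= /delta eqxx mul1r big1 ?addr0 // => i ne.
by rewrite eq_sym (negbTE ne) mul0r.
Qed.

Lemma sum_pure (A : finType) (As : {set A}) (f h : A -> R) a0 :
  (forall a, 0 <= f a) -> \sum_(a in As) f a = 1 -> a0 \in As -> f a0 = 1 ->
  \sum_(a in As) f a * h a = h a0.
Proof.
move=> f_ge0 f_sum a0_in fa0; rewrite (bigD1 a0) //= fa0 mul1r.
rewrite (bigD1 a0) //= fa0 in f_sum.
have /psumr_eq0P f0 : \sum_(a in As | a != a0) f a = 0 by lra.
by rewrite big1 ?addr0 // => a a_in; rewrite f0 ?mul0r.
Qed.

Hypothesis mu_ge0 : forall s' s a1 a2, s' != s -> 0 <= mu s' s a1 a2.

Lemma Qgen_generator (f : 'I_n -> A1 -> R) (g : 'I_n -> A2 -> R) :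
  is_strat1 As1 f -> is_strat2 As2 g -> generator (Qgen As1 As2 mu f g).
Proof.
move=> hf hg; split=> s.
  move=> s' ne; rewrite mxE; apply: sumr_ge0 => a1 _; apply: sumr_ge0 => a2 _.
  have [f_ge0 _] := hf s; have [g_ge0 _] := hg s.
  by rewrite !mulr_ge0 // /muf eq_sym (negbTE ne) mu_ge0 // eq_sym.
under eq_bigr do rewrite mxE.
rewrite exchange_big /= big1 // => a1 _; rewrite exchange_big /= big1 // => a2 _.
by rewrite -big_distrr /= muf_row_sum0 mulr0.
Qed.

Variables (g : 'I_n -> A2 -> R) (a2s : 'I_n -> A2) (s : 'I_n).
Hypotheses (hg : is_strat2 As2 g) (a2s_in : a2s s \in As2 s)
           (g_pure : g s (a2s s) = 1).

Lemma sum_pure2 (F : A2 -> R) : \sum_(a2 in As2 s) g s a2 * F a2 = F (a2s s).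
Proof. by have [g_ge0 [_ g_sum]] := hg s; apply: sum_pure. Qed.

Lemma Qgen_pure2 (f : 'I_n -> A1 -> R) s' :
  Qgen As1 As2 mu f g s s' = \sum_(a1 in As1 s) f s a1 * muf mu s' s a1 (a2s s).
Proof.
rewrite mxE; apply: eq_bigr => a1 _.
by rewrite -sum_pure2 big_distrr /=; apply: eq_bigr => a2 _; rewrite mulrA.
Qed.

Lemma rew_pure2 r (f : 'I_n -> A1 -> R) :
  rew As1 As2 r f g s = \sum_(a1 in As1 s) f s a1 * r s a1 (a2s s).
Proof.
apply: eq_bigr => a1 _.
by rewrite -sum_pure2 big_distrr /=; apply: eq_bigr => a2 _; rewrite mulrA.
Qed.

End Game.

Section PlayerOne.
Variables (R : realFieldType) (n : nat) (A1 A2 : finType).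
Variables (As1 : 'I_n -> {set A1}) (As2 : 'I_n -> {set A2}).
Variable mu : 'I_n -> 'I_n -> A1 -> A2 -> R.
Hypothesis mu_ge0 : forall s' s a1 a2, s' != s -> 0 <= mu s' s a1 a2.
Variables (r1 : 'I_n -> A1 -> A2 -> R) (fs : 'I_n -> A1 -> R) (gs : 'I_n -> A2 -> R).
Hypotheses (hf : is_strat1 As1 fs) (hg : is_strat2 As2 gs).
Variables (alphah m : R).
Hypotheses (alphah_gt0 : 0 < alphah) (m_gt0 : 0 < m).
Hypothesis nash1 : forall s f', is_strat1 As1 f' ->
  vdisc As1 As2 mu r1 alphah f' gs s <= vdisc As1 As2 mu r1 alphah fs gs s.
Variables (a1s : 'I_n -> A1) (a2s : 'I_n -> A2).
Hypothesis hM1 : forall s, [/\ a1s s \in As1 s, a2s s \in As2 s,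
                       fs s (a1s s) = 1 & gs s (a2s s) = 1].
Variable p : 'I_n -> R.
Hypothesis p_sum1 : \sum_(s < n) p s = 1.
Hypothesis hM2 : forall s s', Qgen As1 As2 mu fs gs s s' = m * (p s' - @delta R n s s').
Hypothesis hM3 : forall s a1, a1 \in As1 s ->
     \sum_(s' < n) (muf mu s' s a1 (a2s s) / m + @delta R n s s')
                   * r1 s' (a1s s') (a2s s')
     <= \sum_(s' < n) p s' * r1 s' (a1s s') (a2s s').

Let rstar t := r1 t (a1s t) (a2s t).
Let pr := \sum_t p t * rstar t.

Definition vstar (al : R) : 'cV[R]_n := \col_t ((rstar t + m / al * pr) / (al + m)).

Definition gap al s a := al * vstar al s 0
  - \sum_t muf mu t s a (a2s s) * vstar al t 0 - r1 s a (a2s s).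

Lemma rew_star t : rew As1 As2 r1 fs gs t = rstar t.
Proof.
have [a1_in a2_in f1 g1] := hM1 t; have [f_ge0 [_ f_sum]] := hf t.
by rewrite (rew_pure2 _ hg a2_in g1) (sum_pure _ f_ge0 f_sum a1_in f1).
Qed.

Lemma vstar_solves al t : 0 < al ->
  al * vstar al t 0 - \sum_t' Qgen As1 As2 mu fs gs t t' * vstar al t' 0 = rstar t.
Proof.
move=> al_gt0.
rewrite (eq_bigr (fun t' => m * (p t' * vstar al t' 0)
                           - m * (@delta R n t t' * vstar al t' 0)));
  last by move=> t' _; rewrite hM2; ring.
rewrite sumrB -!big_distrr /= sum_deltaE.
rewrite (eq_bigr (fun t' => p t' * rstar t' / (al + m)
                           + m / al * pr / (al + m) * p t'));
  last by move=> t' _; rewrite mxE; ring.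
rewrite big_split /= -big_distrl -big_distrr /= p_sum1 -/pr mxE.
by field; rewrite lt0r_neq0 ?addr_gt0 // lt0r_neq0.
Qed.

Lemma vdisc_star al t : 0 < al -> vdisc As1 As2 mu r1 al fs gs t = vstar al t 0.
Proof.
move=> al_gt0; rewrite /vdisc.
have -> : \col_(t < n) rew As1 As2 r1 fs gs t =
          (al%:M - Qgen As1 As2 mu fs gs) *m vstar al.
  by apply/matrixP => i j; rewrite (ord1 j) scalar_subMmxE vstar_solves // mxE rew_star.
by rewrite mulKmx // (generator_resolvent_unit (Qgen_generator mu_ge0 hf hg) al_gt0).
Qed.

Lemma gapE al s a : 0 < al -> gap al s a =
  (al * (rstar s - r1 s a (a2s s)) + m * pr - m * r1 s a (a2s s)
     - \sum_t muf mu t s a (a2s s) * rstar t) / (al + m).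
Proof.
move=> al_gt0; rewrite /gap.
rewrite (eq_bigr (fun t => muf mu t s a (a2s s) * rstar t / (al + m)
                          + m / al * pr / (al + m) * muf mu t s a (a2s s)));
  last by move=> t _; rewrite mxE; ring.
rewrite big_split /= -big_distrl -big_distrr /= muf_row_sum0 mxE.
by field; rewrite lt0r_neq0 ?addr_gt0 // lt0r_neq0.
Qed.

(* Player 1 deviates to the pure action a in state s only. *)
Lemma gap_ge0_at_alphah s a : a \in As1 s -> 0 <= gap alphah s a.
Proof.
move=> a_in.
pose f' t (b : A1) : R := if t == s then (b == a)%:R else fs t b.
have hf' : is_strat1 As1 f'.
  move=> t; rewrite /f'; have [-> |] := eqVneq t s; last by have := hf t.
  split=> [b|]; first by rewrite ler0n.
  split=> [b b_out|]; first by case: eqP b_out => // ->; rewrite a_in.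
  by rewrite (bigD1 a) //= eqxx big1 ?addr0 // => b /andP [_ /negbTE ->].
have [_ a2_in _ g1] := hM1 s; have [f'_ge0 [_ f'_sum]] := hf' s.
have f'a : f' s a = 1 by rewrite /f' !eqxx.
have Qf'_off t t' : t != s ->
    Qgen As1 As2 mu f' gs t t' = Qgen As1 As2 mu fs gs t t'.
  by move=> ne; rewrite !mxE /f' (negbTE ne).
have := @resolvent_le_at R n (Qgen As1 As2 mu f' gs) alphah
  (Qgen_generator mu_ge0 hf' hg) alphah_gt0
  (\col_(t < n) rew As1 As2 r1 f' gs t) (vstar alphah) s.
rewrite mxE (rew_pure2 _ hg a2_in g1) (sum_pure _ f'_ge0 f'_sum a_in f'a).
under [X in _ <= _ - X]eq_bigr do
  rewrite (Qgen_pure2 _ _ hg a2_in g1) (sum_pure _ f'_ge0 f'_sum a_in f'a).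
rewrite /gap subr_ge0 lerBrDr; apply.
- move=> t ne; under eq_bigr do rewrite Qf'_off //.
  by rewrite mxE vstar_solves // -rew_star /rew /f' (negbTE ne).
- by move=> t; rewrite -vdisc_star //; apply: nash1.
Qed.

Lemma gap_ge0 al s a : 0 < al -> al <= alphah -> a \in As1 s -> 0 <= gap al s a.
Proof.
move=> al_gt0 al_le a_in.
have := gap_ge0_at_alphah a_in; rewrite !gapE //.
rewrite !pmulr_lge0 ?invr_gt0 ?addr_gt0 //.
have := hM3 a_in.
under eq_bigr do rewrite mulrDl mulrAC.
rewrite big_split /= sum_deltaE -big_distrl /= -/pr -/(rstar s).
rewrite -lerBrDr ler_pdivrMr // mulrBl => M3.
set S := \sum_(t < n) muf mu t s a (a2s s) * rstar t.
set X := rstar s - r1 s a (a2s s).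
have {}M3 : S <= pr * m - rstar s * m := M3.
have mX_le : m * X <= m * pr - m * r1 s a (a2s s) - S.
  by rewrite /X mulrBr [pr * m]mulrC [rstar s * m]mulrC in M3 *; lra.
have [X_ge0|X_lt0] := lerP 0 X.
  by have := mulr_ge0 (ltW al_gt0) X_ge0; have := mulr_ge0 (ltW m_gt0) X_ge0; lra.
have : alphah * X <= al * X by rewrite ler_nM2r.
lra.
Qed.

Lemma player1_best_response al s f' : 0 < al -> al <= alphah -> is_strat1 As1 f' ->
  vdisc As1 As2 mu r1 al f' gs s <= vdisc As1 As2 mu r1 al fs gs s.
Proof.
move=> al_gt0 al_le hf'; rewrite vdisc_star //.
apply: (resolvent_le (Qgen_generator mu_ge0 hf' hg) al_gt0) => t.
have [_ a2_in _ g1] := hM1 t; have [f'_ge0 [_ f'_sum]] := hf' t.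
have gap_avg : 0 <= \sum_(b in As1 t) f' t b * gap al t b.
  by apply: sumr_ge0 => b b_in; rewrite mulr_ge0 ?gap_ge0.
rewrite mxE (rew_pure2 _ hg a2_in g1).
under [X in _ - X]eq_bigr do rewrite (Qgen_pure2 _ _ hg a2_in g1) big_distrl /=.
rewrite exchange_big /=.
move: gap_avg; rewrite /gap.
under [X in 0 <= X]eq_bigr do rewrite !mulrBr big_distrr /=.
under [X in 0 <= X]eq_bigr do under eq_bigr do rewrite mulrA.
rewrite !sumrB -big_distrl /= f'_sum mul1r.
lra.
Qed.

End PlayerOne.

Section PlayerTwo.
Variables (R : realFieldType) (n : nat) (A1 A2 : finType).
Variables (As1 : 'I_n -> {set A1}) (As2 : 'I_n -> {set A2}).
Variable mu : 'I_n -> 'I_n -> A1 -> A2 -> R.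

Let mu_swap t s b a := mu t s a b.

Lemma Qgen_swap (f : 'I_n -> A1 -> R) (g : 'I_n -> A2 -> R) :
  Qgen As2 As1 mu_swap g f = Qgen As1 As2 mu f g.
Proof.
apply/matrixP => i j; rewrite !mxE exchange_big /=.
by apply: eq_bigr => a _; apply: eq_bigr => b _; rewrite [g i b * _]mulrC.
Qed.

Lemma vdisc_swap (r : 'I_n -> A1 -> A2 -> R) al f g s :
  vdisc As2 As1 mu_swap (fun s b a => r s a b) al g f s = vdisc As1 As2 mu r al f g s.
Proof.
rewrite /vdisc Qgen_swap; congr ((_ *m _) _ _); apply/matrixP => i j; rewrite !mxE.
by rewrite /rew exchange_big; apply: eq_bigr => a _; apply: eq_bigr => b _;
  rewrite [g i b * _]mulrC.
Qed.

Hypothesis mu_ge0 : forall s' s a1 a2, s' != s -> 0 <= mu s' s a1 a2.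
Variables (r2 : 'I_n -> A1 -> A2 -> R) (fs : 'I_n -> A1 -> R) (gs : 'I_n -> A2 -> R).
Hypotheses (hf : is_strat1 As1 fs) (hg : is_strat2 As2 gs).
Variables (alphah m : R).
Hypotheses (alphah_gt0 : 0 < alphah) (m_gt0 : 0 < m).
Hypothesis nash2 : forall s g', is_strat2 As2 g' ->
  vdisc As1 As2 mu r2 alphah fs g' s <= vdisc As1 As2 mu r2 alphah fs gs s.
Variables (a1s : 'I_n -> A1) (a2s : 'I_n -> A2).
Hypothesis hM1 : forall s, [/\ a1s s \in As1 s, a2s s \in As2 s,
                       fs s (a1s s) = 1 & gs s (a2s s) = 1].
Variable p : 'I_n -> R.
Hypothesis p_sum1 : \sum_(s < n) p s = 1.
Hypothesis hM2 : forall s s', Qgen As1 As2 mu fs gs s s' = m * (p s' - @delta R n s s').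
Hypothesis hM3 : forall s a2, a2 \in As2 s ->
     \sum_(s' < n) (muf mu s' s (a1s s) a2 / m + @delta R n s s')
                   * r2 s' (a1s s') (a2s s')
     <= \sum_(s' < n) p s' * r2 s' (a1s s') (a2s s').

Lemma player2_best_response al s g' : 0 < al -> al <= alphah -> is_strat2 As2 g' ->
  vdisc As1 As2 mu r2 al fs g' s <= vdisc As1 As2 mu r2 al fs gs s.
Proof.
rewrite -!(vdisc_swap r2); apply: (player1_best_response (mu := mu_swap) _ hg hf
  alphah_gt0 m_gt0 _ (a1s := a2s) (a2s := a1s) _ p_sum1) => //.
- by move=> ? ? ? ? ?; apply: mu_ge0.
- by move=> s0 g0 hg0; rewrite !vdisc_swap; apply: nash2.
- by move=> s0; have [? ? ? ?] := hM1 s0.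
- by move=> s0 s'; rewrite Qgen_swap.
Qed.

End PlayerTwo.

Theorem theorem5 (R : realFieldType) (n : nat) (A1 A2 : finType)
  (As1 : 'I_n -> {set A1}) (As2 : 'I_n -> {set A2})
  (mu : 'I_n -> 'I_n -> A1 -> A2 -> R) (r1 r2 : 'I_n -> A1 -> A2 -> R)
  (* well-formed game: nonempty action sets, nonnegative off-diagonal rates *)
  (hA1 : forall s, As1 s != set0) (hA2 : forall s, As2 s != set0)
  (hmu : forall s' s a1 a2, s' != s -> 0 <= mu s' s a1 a2)
  (fs : 'I_n -> A1 -> R) (gs : 'I_n -> A2 -> R)
  (hf : is_strat1 As1 fs) (hg : is_strat2 As2 gs)
  (alphah : R) (halpha : 0 < alphah)
  (hnash : disc_nash As1 As2 mu r1 r2 alphah fs gs)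
  (hnorm : 0 < normmu As1 As2 mu)
  (* (M1) purity *)
  (a1s : 'I_n -> A1) (a2s : 'I_n -> A2)
  (hM1 : forall s, [/\ a1s s \in As1 s, a2s s \in As2 s,
                       fs s (a1s s) = 1 & gs s (a2s s) = 1])
  (* (M2) *)
  (p : 'I_n -> R) (hp0 : forall s, 0 <= p s) (hp1 : \sum_(s < n) p s = 1)
  (hM2 : forall s s', Qgen As1 As2 mu fs gs s s' =
                      normmu As1 As2 mu * (p s' - @delta R n s s'))
  (* (M3) *)
  (hM3a : forall s a1, a1 \in As1 s ->
     \sum_(s' < n) (muf mu s' s a1 (a2s s) / normmu As1 As2 mu + @delta R n s s')
                   * r1 s' (a1s s') (a2s s')
     <= \sum_(s' < n) p s' * r1 s' (a1s s') (a2s s'))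
  (hM3b : forall s a2, a2 \in As2 s ->
     \sum_(s' < n) (muf mu s' s (a1s s) a2 / normmu As1 As2 mu + @delta R n s s')
                   * r2 s' (a1s s') (a2s s')
     <= \sum_(s' < n) p s' * r2 s' (a1s s') (a2s s')) :
  blackwell_nash As1 As2 mu r1 r2 fs gs.
Proof.
exists alphah => // al al_gt0 al_le s; split => [f' hf' | g' hg'].
- apply: (player1_best_response hmu hf hg halpha hnorm _ hM1 hp1 hM2 hM3a) => //.
  by move=> s0 f0 hf0; apply: (proj1 (hnash s0)).
- apply: (player2_best_response hmu hf hg halpha hnorm _ hM1 hp1 hM2 hM3b) => //.
  by move=> s0 g0 hg0; apply: (proj2 (hnash s0)).
Qed.
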